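(* Let $m, N, T$ be positive integers, let $\gamma \in [0,1)$, and let $a_1,\ldots,a_N \in [0,1]$ and $b_1,\ldots,b_N \in [0,1]$ satisfy $\sum_{j=1}^N a_j = 1$ and $\sum_{j=1}^N b_j = 1$. Put $$q(z) = a_1 + a_2 z + \cdots + a_N z^{N-1}, \qquad p(z) = b_1 z + b_2 z^2 + \cdots + b_N z^N,$$ $$\Phi(z) = (1-\gamma)^T \frac{z\,(q(z))^T}{(1-\gamma p(z))^T}.$$ Let $\mu_1,\ldots,\mu_m \in \mathbb{C}$ and consider the polynomial in $\lambda$ $$\tilde f(\lambda) = \prod_{j=1}^m \Big( \big[\lambda^N - \gamma \lambda^N p(\lambda^{-1})\big]^T - (1-\gamma)^T \mu_j \lambda^{T-1} \big[\lambda^{N-1} q(\lambda^{-1})\big]^T \Big).$$ Then all roots of $\tilde f$ lie in the open unit disc $D = \{z \in \mathbb{C} : |z| < 1\}$ if and only if $$\mu_j \in \big(\overline{\mathbb{C}} \setminus \Phi(\overline{D})\big)^*, \qquad j = 1,\ldots,m,$$ where $\overline{D} = \{z \in \mathbb{C} : |z| \le 1\}$.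
   Context: $\overline{\mathbb{C}} = \mathbb{C} \cup \{\infty\}$ denotes the extended complex plane. For a set $S \subseteq \overline{\mathbb{C}}$, $S^* = \{ z^* : z \in S\}$, where the inversion is $z^* = 1/\bar z$ ($\bar z$ the complex conjugate), with the conventions $0^* = \infty$ and $\infty^* = 0$. Here $\lambda^N p(\lambda^{-1})$ and $\lambda^{N-1} q(\lambda^{-1})$ denote the polynomials $b_1\lambda^{N-1} + \cdots + b_N$ and $a_1 \lambda^{N-1} + \cdots + a_N$, respectively. *)

From HB Require Import structures.
From mathcomp Require Import all_boot all_order all_algebra.
From mathcomp Require Import reals.
From mathcomp Require Import complex.
Set Implicit Arguments. Unset Strict Implicit. Unset Printing Implicit Defensive.
Import Order.TTheory GRing.Theory Num.Theory.
Local Open Scope ring_scope.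
Local Open Scope complex_scope.

Section Defs.
Variable R : realType.
Local Notation C := R[i].

Inductive extC := Fin of C | Inf.

Definition ext_inv (z : extC) : extC :=
  match z with
  | Fin w => if w == 0 then Inf else Fin (w^*)^-1
  | Inf => Fin 0
  end.

Definition ext_star (S : extC -> Prop) : extC -> Prop :=
  fun w => exists z, S z /\ w = ext_inv z.

Definition ext_compl (S : extC -> Prop) : extC -> Prop := fun w => ~ S w.

(* q(z) = a_1 + a_2 z + ... + a_N z^(N-1)   (a is 0-indexed: a i = a_(i+1)) *)
Definition qpoly (N : nat) (a : 'I_N -> R) : {poly C} :=
  \sum_(i < N) ((a i)%:C)%:P * 'X^i.
Definition ppoly (N : nat) (b : 'I_N -> R) : {poly C} :=
  \sum_(i < N) ((b i)%:C)%:P * 'X^(i.+1).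
(* λ^N p(λ^{-1}) = b_1 λ^(N-1) + ... + b_N *)
Definition prev (N : nat) (b : 'I_N -> R) : {poly C} :=
  \sum_(i < N) ((b i)%:C)%:P * 'X^(N.-1 - i).
(* λ^(N-1) q(λ^{-1}) = a_1 λ^(N-1) + ... + a_N *)
Definition qrev (N : nat) (a : 'I_N -> R) : {poly C} :=
  \sum_(i < N) ((a i)%:C)%:P * 'X^(N.-1 - i).

Definition Phi (N T : nat) (gamma : R) (a b : 'I_N -> R) (z : C) : C :=
  ((1 - gamma)%:C) ^+ T * z * (qpoly a).[z] ^+ T
    / (1 - gamma%:C * (ppoly b).[z]) ^+ T.

Definition Phi_closed_disc (N T : nat) (gamma : R) (a b : 'I_N -> R)
  : extC -> Prop :=
  fun w => exists z : C, `|z| <= 1 /\ w = Fin (Phi T gamma a b z).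

Definition ftilde (m N T : nat) (gamma : R) (a b : 'I_N -> R)
  (mu : 'I_m -> C) : {poly C} :=
  \prod_(j < m)
    (('X^N - (gamma%:C)%:P * prev b) ^+ T
     - (((1 - gamma)%:C) ^+ T * mu j)%:P * 'X^(T.-1) * (qrev a) ^+ T).

End Defs.

From Pilot Require Import Defs.
From mathcomp Require Import all_boot all_order all_algebra.
From mathcomp Require Import reals complex.
From mathcomp Require Import zify ring.

(* For l z = 1, the factor of ftilde belonging to mu evaluated at l is
   l^(NT) ((1 - gamma p(z))^T - (1 - gamma)^T mu z q(z)^T).  On the closed
   unit disc |gamma p(z)| <= gamma < 1, so this vanishes exactly when
   mu Phi(z) = 1: ftilde has a root outside the open disc iff some mu_j is the
   reciprocal of a value of Phi on the closed disc.  Since Phi has real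
   coefficients it commutes with conjugation, so this says that
   mu_j^* = 1 / conj mu_j lies in Phi of the closed disc. *)
Import Order.TTheory GRing.Theory Num.Theory.
Local Open Scope ring_scope.
Local Open Scope complex_scope.

Section Reversal.
Set Implicit Arguments. Unset Strict Implicit.
Variables (R : realType) (N : nat).
Implicit Types (a b : 'I_N -> R) (l z : R[i]).

Lemma horner_qpoly a z : (Defs.qpoly a).[z] = \sum_(i < N) (a i)%:C * z ^+ i.
Proof. by rewrite /Defs.qpoly horner_sum; apply: eq_bigr => i _; rewrite hornerE hornerXn. Qed.

Lemma horner_ppoly b z : (ppoly b).[z] = \sum_(i < N) (b i)%:C * z ^+ i.+1.
Proof. by rewrite /ppoly horner_sum; apply: eq_bigr => i _; rewrite hornerE hornerXn. Qed.

Lemma horner_prev b l z : l * z = 1 -> (Defs.prev b).[l] = l ^+ N * (ppoly b).[z].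
Proof.
move=> lz; rewrite horner_ppoly /Defs.prev horner_sum mulr_sumr; apply: eq_bigr => i _.
rewrite hornerE hornerXn mulrCA; congr (_ * _).
have -> : l ^+ N = l ^+ (N.-1 - i) * l ^+ i.+1.
  by rewrite -exprD; congr (_ ^+ _); have := ltn_ord i; lia.
by rewrite -mulrA -exprMn lz expr1n mulr1.
Qed.

Lemma horner_qrev a l z : l * z = 1 -> (qrev a).[l] = l ^+ N.-1 * (Defs.qpoly a).[z].
Proof.
move=> lz; rewrite horner_qpoly /qrev horner_sum mulr_sumr; apply: eq_bigr => i _.
rewrite hornerE hornerXn mulrCA; congr (_ * _).
have -> : l ^+ N.-1 = l ^+ (N.-1 - i) * l ^+ i.
  by rewrite -exprD; congr (_ ^+ _); have := ltn_ord i; lia.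
by rewrite -mulrA -exprMn lz expr1n mulr1.
Qed.

Lemma map_conjC_qpoly a : map_poly Num.conj (Defs.qpoly a) = Defs.qpoly a.
Proof.
rewrite /Defs.qpoly rmorph_sum; apply: eq_bigr => i _.
by rewrite rmorphM /= map_polyC map_polyXn; congr (_%:P * _); exact: conjc_real.
Qed.

Lemma map_conjC_ppoly b : map_poly Num.conj (ppoly b) = ppoly b.
Proof.
rewrite /ppoly rmorph_sum; apply: eq_bigr => i _.
by rewrite rmorphM /= map_polyC map_polyXn; congr (_%:P * _); exact: conjc_real.
Qed.

End Reversal.

Lemma conjCV (C : numClosedFieldType) (x : C) : (x^-1)^*%R = (x^*%R)^-1.
Proof. exact: fmorphV. Qed.

Section ExtendedPlane.
Variable R : realType.

Lemma ext_invK : involutive (@ext_inv R).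
Proof.
case=> [w|] /=; last by rewrite eqxx.
have [-> // | w0] := eqVneq w 0.
by rewrite /= invr_eq0 conjC_eq0 (negbTE w0) conjCV conjCK invrK.
Qed.

Lemma ext_starE (S : extC R -> Prop) w : ext_star S w <-> S (ext_inv w).
Proof.
split=> [[z [Sz ->]] | Sw]; first by rewrite ext_invK.
by exists (ext_inv w); rewrite ext_invK.
Qed.

End ExtendedPlane.

Section Phi.
Set Implicit Arguments. Unset Strict Implicit.
Variables (R : realType) (N T : nat) (gamma : R) (a b : 'I_N -> R).
Hypotheses (hN : (0 < N)%N) (hT : (0 < T)%N).
Hypotheses (hg0 : 0 <= gamma) (hg1 : gamma < 1).
Hypotheses (hb : forall i, 0 <= b i <= 1) (hsb : \sum_(i < N) b i = 1).
Implicit Types (l z mu : R[i]).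

Local Notation Phi := (Phi T gamma a b).

Lemma Phi0 : Phi 0 = 0.
Proof. by rewrite /Phi mulr0 !mul0r. Qed.

Lemma conjC_Phi z : (Phi z)^*%R = Phi z^*%R.
Proof.
rewrite /Phi fmorph_div !(rmorphM, rmorphXn, rmorphB, rmorph1) -!horner_map.
rewrite map_conjC_qpoly map_conjC_ppoly.
by congr ((1 - _) ^+ T * _ * _ / (1 - _ * _) ^+ T); exact: conjc_real.
Qed.

Lemma norm_ppoly_le1 z : `|z| <= 1 -> `|(ppoly b).[z]| <= 1.
Proof.
move=> hz; rewrite horner_ppoly.
apply: (le_trans (ler_norm_sum _ _ _)).
have -> : (1 : R[i]) = \sum_(i < N) (b i)%:C by rewrite -rmorph_sum hsb.
apply: ler_sum => i _.
have b0 : 0 <= (b i)%:C by rewrite ler0c; case/andP: (hb i).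
by rewrite normrM normrX (ger0_norm b0) ler_piMr // exprn_ile1.
Qed.

Lemma Phi_denom_neq0 z : `|z| <= 1 -> 1 - gamma%:C * (ppoly b).[z] != 0.
Proof.
move=> hz; rewrite subr_eq0; apply/eqP => h.
have : `|gamma%:C * (ppoly b).[z]| <= gamma%:C.
  by rewrite normrM ger0_norm ?ler0c // ler_piMr ?ler0c ?norm_ppoly_le1.
by rewrite -h normr1 -[1]/(1%:C) lecR leNgt hg1.
Qed.

Definition ftilde_factor mu : {poly R[i]} :=
  ('X^N - (gamma%:C)%:P * Defs.prev b) ^+ T
  - (((1 - gamma)%:C) ^+ T * mu)%:P * 'X^(T.-1) * (qrev a) ^+ T.

Lemma root_ftilde m (mu : 'I_m -> R[i]) l :
  root (ftilde T gamma a b mu) l = [exists j, root (ftilde_factor (mu j)) l].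
Proof.
rewrite /root /ftilde horner_prod.
by apply/prodf_eq0/existsP => [[j _ hj] | [j hj]]; exists j.
Qed.

Lemma horner_ftilde_factor mu l z : l * z = 1 ->
  (ftilde_factor mu).[l] = l ^+ (N * T) * ((1 - gamma%:C * (ppoly b).[z]) ^+ T
    - (1 - gamma)%:C ^+ T * mu * z * (Defs.qpoly a).[z] ^+ T).
Proof.
move=> lz; rewrite !hornerE (horner_prev b lz) (horner_qrev a lz).
have -> : l ^+ N - gamma%:C * (l ^+ N * (ppoly b).[z])
          = l ^+ N * (1 - gamma%:C * (ppoly b).[z]) by ring.
rewrite !exprMn -!exprM.
have -> : l ^+ (N * T) = l ^+ (T.-1 + N.-1 * T) * l.
  by rewrite -exprSr; congr (_ ^+ _); nia.
rewrite exprD -[X in _ - X]mulr1 -lz; ring.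
Qed.

Lemma root_ftilde_factor_inv mu z : z != 0 -> `|z| <= 1 ->
  root (ftilde_factor mu) z^-1 = (mu * Phi z == 1).
Proof.
move=> z0 hz; have lz : z^-1 * z = 1 by rewrite mulVf.
have DT : (1 - gamma%:C * (ppoly b).[z]) ^+ T != 0.
  by rewrite expf_neq0 ?Phi_denom_neq0.
rewrite rootE (horner_ftilde_factor _ lz) mulf_eq0 expf_eq0 invr_eq0 (negbTE z0).
rewrite andbF /= subr_eq0 -[RHS](inj_eq (mulIf DT)) mul1r eq_sym /Phi.
by congr (_ == _); field.
Qed.

Lemma ftilde_factor_root_outside_disc mu :
  (exists2 l, root (ftilde_factor mu) l & 1 <= `|l|) <->
  (exists2 z, `|z| <= 1 & mu * Phi z = 1).
Proof.
split => [[l rl hl] | [z hz Pz]].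
- have l0 : l != 0 by apply: contraTneq hl => ->; rewrite normr0 ler10.
  have hl' : `|l^-1| <= 1 by rewrite normfV invf_le1 ?normr_gt0.
  exists l^-1 => //.
  by apply/eqP; rewrite -root_ftilde_factor_inv ?invr_eq0 // invrK.
- have z0 : z != 0 by apply: contra_eq_neq Pz => ->; rewrite Phi0 mulr0 eq_sym oner_neq0.
  exists z^-1; first by rewrite root_ftilde_factor_inv // Pz.
  by rewrite normfV invf_ge1 ?normr_gt0.
Qed.

Lemma star_compl_Phi_disc mu :
  ext_star (ext_compl (Phi_closed_disc T gamma a b)) (Fin mu) <->
  ~ exists2 z, `|z| <= 1 & mu * Phi z = 1.
Proof.
rewrite ext_starE /ext_compl /=.
have [-> | mu0] := eqVneq mu 0.
  split=> [_ [z _] | _ [z [_ //]]].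
  by rewrite mul0r => /esym/eqP; rewrite oner_eq0.
apply: not_iff_compat.
split=> [[z [hz [e]]] | [z hz e]]; exists z^*%R; rewrite ?norm_conjC //.
  by rewrite -conjC_Phi -e conjCV conjCK mulfV.
have Phi_z : Phi z = mu^-1 by apply: (mulfI mu0); rewrite e mulfV.
by split=> //; rewrite -conjC_Phi Phi_z conjCV.
Qed.

End Phi.

Theorem lemma3 (R : realType) (m N T : nat) (hm : (0 < m)%N) (hN : (0 < N)%N)
  (hT : (0 < T)%N) (gamma : R) (hg0 : 0 <= gamma) (hg1 : gamma < 1)
  (a b : 'I_N -> R)
  (ha : forall i, 0 <= a i <= 1) (hb : forall i, 0 <= b i <= 1)
  (hsa : \sum_(i < N) a i = 1) (hsb : \sum_(i < N) b i = 1)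
  (mu : 'I_m -> R[i]) :
  (forall z : R[i], root (ftilde T gamma a b mu) z -> `|z| < 1)
  <->
  (forall j : 'I_m,
     ext_star (ext_compl (Phi_closed_disc T gamma a b)) (Fin (mu j))).
Proof.
have unstable_root := ftilde_factor_root_outside_disc a hN hT hg0 hg1 hb hsb.
split=> [Hroots j | Hmu z].
- apply/star_compl_Phi_disc => /unstable_root [l rl hl].
  suff /lt_geF : `|l| < 1 by rewrite hl.
  by apply: Hroots; rewrite root_ftilde; apply/existsP; exists j.
- rewrite root_ftilde => /existsP [j rj].
  rewrite real_ltNge ?normr_real ?real1 //; apply/negP => hl.
  have := Hmu j; rewrite star_compl_Phi_disc; apply.
  by apply/unstable_root; exists z.
Qed.
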